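(* Let $L$ be a hyperbolic saddle of a planar vector field with characteristic number $\lambda<1$ having a separatrix loop, and suppose that inside the loop there is another saddle $I$ whose separatrix winds towards the loop in negative time. Consider an unfolding of this vector field in a generic one-parameter family with parameter $\varepsilon$, and let $\varepsilon_n\to 0$ be the parameter values at which a sparkling saddle connection between $L$ and $I$ making $n$ turns around the vanished loop occurs. Suppose that, in a coordinate $x$ on a semitransversal to the loop (with $x=0$ on the loop), the monodromy map of the saddle loop has the form $\Delta(x)=Cx^\lambda$ and the monodromy map for the perturbed loop has the form $Cx^\lambda+\varepsilon$. Let $B$ be the $x$-coordinate of the point where the semitransversal intersects the separatrix of $I$. Then $$\ln(-\ln\varepsilon_n)=-n\ln\lambda+\beta+\theta\lambda^n+o(\lambda^n),$$ where $\beta=\ln\bigl(\frac{\ln C}{1-\lambda}-\ln B\bigr)$ and $\theta=-e^{-\beta}\frac{\ln C}{1-\lambda}$.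
   Context: The characteristic number of a hyperbolic saddle with eigenvalues $\lambda_-<0<\lambda_+$ is $-\lambda_-/\lambda_+$. *)

From HB Require Import structures.
From mathcomp Require Import all_boot all_order all_algebra.
From mathcomp Require Import all_classical all_reals all_analysis.
Set Implicit Arguments. Unset Strict Implicit. Unset Printing Implicit Defensive.
Import Order.TTheory GRing.Theory Num.Theory.
Import numFieldNormedType.Exports.
Local Open Scope ring_scope.

Definition perturbed_monodromy (R : realType) (C lam eps : R) (x : R) : R :=
  C * x `^ lam + eps.

(* After the perturbation, the (outgoing) separatrix of L leaving the vanished
   loop first hits the semitransversal at Delta_eps(0) = eps; after n further
   turns around the vanished loop it hits it at Delta_eps^(n+1)(0).
   A sparkling saddle connection between L and I making n turns occurs at
   parameter eps iff this point is the point B of the separatrix of I. *)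
Definition sparkling_connection (R : realType) (C lam B eps : R) (n : nat) : Prop :=
  iter n.+1 (perturbed_monodromy C lam eps) 0 = B.

From HB Require Import structures.
From mathcomp Require Import all_boot all_order all_algebra.
From mathcomp Require Import all_classical all_reals all_analysis.
From mathcomp Require Import ring lra.
Import Order.TTheory GRing.Theory Num.Theory.
Import numFieldNormedType.Exports.
Local Open Scope classical_set_scope.
Local Open Scope ring_scope.

(* In the coordinate l = ln x - K, where K = ln C / (1 - lam) is the logarithm
   of the fixed point of x |-> C x^lam, the perturbed monodromy acts as
   l |-> lam l + delta with 0 <= delta <= eps^(1-lam) / C.  Starting from
   Delta_eps(0) = eps and requiring the (n+1)-st iterate to be B gives
   -ln eps_n = A / lam^n - K + E_n with A = K - ln B and 0 <= E_n = O(lam^n),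
   because eps_n^(1-lam) is exponentially small in lam^-n.  Then
   ln(-ln eps_n) = ln A - n ln lam + ln(1 + z_n) with
   z_n = lam^n (E_n - K) / A, and ln(1 + z) = z + O(z^2) leaves a remainder
   O(lam^(2n)) = o(lam^n). *)

Lemma littleo_of_le_sqr {R : realFieldType} {T : Type} (F : filter_on T)
    (f g : T -> R) (c : R) :
  g @ F --> 0 -> (\forall x \near F, `|f x| <= c * `|g x| ^+ 2) -> f =o_F g.
Proof.
move=> g_to0 f_le; apply/eqoP => e e_gt0.
have r_gt0 : 0 < e / (`|c| + 1) by rewrite divr_gt0 ?ltr_wpDl.
near=> x.
have gx_lt : `|g x| < e / (`|c| + 1) by near: x; exact: cvgr0_norm_lt.
apply: le_trans (_ : c * `|g x| ^+ 2 <= e * `|g x|); first by near: x.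
rewrite ltr_pdivlMr ?ltr_wpDl // in gx_lt.
have := normr_ge0 (g x); have := ler_norm c; nra.
Unshelve. all: by end_near.
Qed.

Section LnExpBounds.
Context {R : realType}.

Lemma norm_ln1Dx_sub_le (z : R) : `|z| <= 1 / 2 -> `|ln (1 + z) - z| <= 2 * z ^+ 2.
Proof.
rewrite ler_norml => /andP[zlo zhi].
have z1 : 0 < 1 + z by lra.
have lnV_le : ln (1 + z)^-1 <= (1 + z)^-1 - 1.
  have := @le_ln1Dx R ((1 + z)^-1 - 1); rewrite addrCA subrr addr0; apply.
  by rewrite ltrBrDl addrN invr_gt0.
rewrite lnV ?posrE // in lnV_le.
have : z ^+ 2 / (1 + z) <= 2 * z ^+ 2.
  by rewrite ler_pdivrMr //; have := sqr_ge0 z; nra.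
have zV : (1 + z)^-1 - 1 = - z + z ^+ 2 / (1 + z) by field; lra.
rewrite zV in lnV_le.
have := @le_ln1Dx R z; rewrite ler_norml; lra.
Qed.

Lemma expRN_le_sqr (s : R) : 0 < s -> expR (- s) <= 2 / s ^+ 2.
Proof.
move=> s0; have := @expR_ge1Dxn R s 1 (ltW s0).
rewrite (_ : 2`!%:R = 2 :> R) // => expR_ge.
rewrite expRN -[2 / _]invf_div lef_pV2 ?posrE ?expR_gt0 ?divr_gt0 ?exprn_gt0 //.
lra.
Qed.

End LnExpBounds.

Lemma perturbed_contraction_bounds (R : realFieldType) (lam d : R) (a : nat -> R) :
  0 <= lam < 1 -> 0 <= d ->
  (forall k, lam * a k <= a k.+1 <= lam * a k + d) ->
  forall k, lam ^+ k * a 0 <= a k <= lam ^+ k * a 0 + d / (1 - lam).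
Proof.
move=> /andP[lam_ge0 lam_lt1] d_ge0 step; elim=> [|k /andP[lo hi]].
  by rewrite expr0 mul1r lexx lerDl divr_ge0 // subr_ge0 ltW.
have /andP[slo shi] := step k.
have geom : lam * (d / (1 - lam)) + d = d / (1 - lam) by field; lra.
rewrite exprS -mulrA; apply/andP; split.
  by apply: le_trans slo; rewrite ler_wpM2l.
apply: le_trans shi _; rewrite -geom addrA lerD2r -mulrDr.
by rewrite ler_wpM2l.
Qed.

Section PerturbedMonodromy.
Context {R : realType} (C lam eps : R).

Local Notation Delta := (perturbed_monodromy C lam eps).
Local Notation K := (ln C / (1 - lam)).
Local Notation defect := (eps / (C * eps `^ lam)).

Lemma perturbed_monodromy_ge x : 0 <= C -> 0 <= x -> eps <= Delta x.
Proof. by move=> C_ge0 x_ge0; rewrite /perturbed_monodromy lerDr mulr_ge0 ?powR_ge0. Qed.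

Lemma ln_perturbed_monodromy_bounds x :
  0 < C -> 0 < lam -> lam < 1 -> 0 < eps -> eps <= x ->
  lam * (ln x - K) <= ln (Delta x) - K <= lam * (ln x - K) + defect.
Proof.
move=> C_gt0 lam_gt0 lam_lt1 eps_gt0 eps_le_x.
have x_gt0 : 0 < x := lt_le_trans eps_gt0 eps_le_x.
rewrite /perturbed_monodromy; set P := C * x `^ lam.
have P_gt0 : 0 < P by rewrite mulr_gt0 // powR_gt0.
have lnP : ln P - K = lam * (ln x - K).
  by rewrite lnM ?posrE ?powR_gt0 // ln_powR; field; rewrite subr_eq0 gt_eqF.
have P_ge : C * eps `^ lam <= P.
  by rewrite ler_pM2l // ge0_ler_powR ?nnegrE //; exact: ltW.
have Pe_gt0 : 0 < P + eps by lra.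
rewrite -lnP lerD2r ler_ln ?posrE // lerDl (ltW eps_gt0) /=.
rewrite addrAC lerD2r -lerBlDl -ln_div ?posrE //.
rewrite (_ : (P + eps) / P = 1 + eps / P); last by field; lra.
apply: le_trans (le_ln1Dx _) _; first by apply: lt_trans (divr_gt0 _ _); rewrite ?ltrN10.
by rewrite ler_pM2l // lef_pV2 ?posrE ?mulr_gt0 ?powR_gt0.
Qed.

Lemma ln_iter_perturbed_monodromy_bounds k :
  0 < C -> 0 < lam -> lam < 1 -> 0 < eps ->
  lam ^+ k * (ln eps - K) <= ln (iter k.+1 Delta 0) - K <=
  lam ^+ k * (ln eps - K) + defect / (1 - lam).
Proof.
move=> C_gt0 lam_gt0 lam_lt1 eps_gt0.
have iter_ge0 j : 0 <= iter j Delta 0.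
  elim: j => //= j IH.
  exact: le_trans (ltW eps_gt0) (perturbed_monodromy_ge _ (ltW C_gt0) IH).
have Delta0 : Delta 0 = eps.
  by rewrite /perturbed_monodromy powR0 ?mulr0 ?add0r ?gt_eqF.
pose a j := ln (iter j.+1 Delta 0) - K.
have -> : ln eps - K = a 0 by rewrite /a /= Delta0.
apply: (@perturbed_contraction_bounds _ _ _ a) => [||j].
- by rewrite ltW.
- by rewrite divr_ge0 ?mulr_ge0 ?powR_ge0 ?ltW.
- apply: ln_perturbed_monodromy_bounds => //.
  exact: perturbed_monodromy_ge _ (ltW C_gt0) (iter_ge0 j).
Qed.

Lemma perturbed_monodromy_defect_expR :
  0 < C -> 0 < lam -> lam < 1 -> 0 < eps ->
  defect = expR ((1 - lam) * (ln eps - K)).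
Proof.
move=> C_gt0 lam_gt0 lam_lt1 eps_gt0.
have -> : (1 - lam) * (ln eps - K) = ln eps - lam * ln eps - ln C.
  by field; rewrite subr_eq0 gt_eqF.
rewrite !expRB lnK ?posrE // -ln_powR lnK ?posrE ?powR_gt0 // lnK ?posrE //.
by rewrite invfM mulrA mulrAC.
Qed.

End PerturbedMonodromy.

Lemma ln_first_order_expansion {R : realType} (A q K E M c : R) :
  0 < A -> 0 < q -> 0 <= E <= c * q -> `|E - K| <= M -> q * M <= A / 2 ->
  `|ln (A / q - K + E) - (ln A - ln q - K / A * q)| <=
    (2 * M ^+ 2 / A ^+ 2 + c / A) * q ^+ 2.
Proof.
move=> A_gt0 q_gt0 /andP[E_ge0 E_le] EK_le qM_le; set z := q * (E - K) / A.
have z_le : `|z| <= q * M / A.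
  rewrite /z normrM normfV normrM (gtr0_norm q_gt0) (gtr0_norm A_gt0).
  by rewrite ler_pM2r ?invr_gt0 // ler_pM2l.
have z_half : `|z| <= 1 / 2 by apply: le_trans z_le _; rewrite ler_pdivrMr //; lra.
have z1_gt0 : 0 < 1 + z by move: z_half; rewrite ler_norml; lra.
have -> : A / q - K + E = A / q * (1 + z) by rewrite /z; field; lra.
rewrite lnM ?posrE ?divr_gt0 // ln_div ?posrE //.
have -> : ln A - ln q + ln (1 + z) - (ln A - ln q - K / A * q) =
          (ln (1 + z) - z) + q * E / A by rewrite /z; field; lra.
have -> : (2 * M ^+ 2 / A ^+ 2 + c / A) * q ^+ 2 =
          2 * (q * M / A) ^+ 2 + c * q ^+ 2 / A by field; lra.
apply: le_trans (ler_normD _ _) _; apply: lerD.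
  apply: le_trans (norm_ln1Dx_sub_le _ z_half) _; rewrite ler_pM2l // -real_normK ?num_real //.
  by rewrite ler_sqr ?nnegrE // (le_trans _ z_le).
rewrite ger0_norm; last by rewrite divr_ge0 ?mulr_ge0 ?(ltW q_gt0) ?(ltW A_gt0).
rewrite ler_pM2r ?invr_gt0 //.
by rewrite expr2 mulrA [c * q * q]mulrC ler_pM2l.
Qed.

Section SparklingConnection.
Context {R : realType} (C lam B : R).

Local Notation K := (ln C / (1 - lam)).
Local Notation A := (K - ln B).

Lemma sparkling_connection_ln_eps_bounds n eps :
  0 < C -> 0 < lam -> lam < 1 -> 0 < eps -> ln B < K ->
  sparkling_connection C lam B eps n ->
  0 <= - ln eps - (A / lam ^+ n - K) <=
    2 / ((1 - lam) * A) ^+ 2 / (1 - lam) * lam ^+ n.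
Proof.
move=> C_gt0 lam_gt0 lam_lt1 eps_gt0 lnB_lt; rewrite /sparkling_connection => orbitB.
have A_gt0 : 0 < A by rewrite subr_gt0.
set q := lam ^+ n; have q_gt0 : 0 < q by rewrite exprn_gt0.
have := ln_iter_perturbed_monodromy_bounds C lam eps n C_gt0 lam_gt0 lam_lt1 eps_gt0.
rewrite orbitB perturbed_monodromy_defect_expR // -/q.
set u := ln eps - K => /andP[u_lo u_hi].
have u_le : u <= - A / q by rewrite ler_pdivlMr // mulrC; lra.
set s := (1 - lam) * A / q.
have s_gt0 : 0 < s by rewrite divr_gt0 // mulr_gt0 // subr_gt0.
have defect_le : expR ((1 - lam) * u) <= 2 / ((1 - lam) * A) ^+ 2 * q ^+ 2.
  have -> : 2 / ((1 - lam) * A) ^+ 2 * q ^+ 2 = 2 / s ^+ 2.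
    by rewrite /s expr_div_n invf_div [RHS]mulrA mulrAC.
  apply: le_trans _ (expRN_le_sqr _ s_gt0).
  by rewrite ler_expR /s -mulrA -mulrN ler_pM2l ?subr_gt0 // -mulNr.
have -> : - ln eps - (A / q - K) = (- (q * u) - A) / q by rewrite /u; field; lra.
apply/andP; split; first by rewrite divr_ge0 ?(ltW q_gt0) // subr_ge0; lra.
(* Hiding [A] keeps [field] from asking for [(1 - lam) * A != 0] in unfolded form. *)
set c := 2 / _ ^+ 2 in defect_le *; clearbody c.
have -> : c / (1 - lam) * q = (c * q ^+ 2 / (1 - lam)) / q.
  by field; rewrite !gt_eqF ?subr_gt0.
rewrite ler_pM2r ?invr_gt0 //.
have : expR ((1 - lam) * u) / (1 - lam) <= c * q ^+ 2 / (1 - lam).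
  by rewrite ler_pM2r ?invr_gt0 ?subr_gt0.
lra.
Qed.

Lemma sparkling_connection_ln_ln_eps_expansion :
  0 < C -> 0 < lam -> lam < 1 -> ln B < K ->
  exists r c : R, 0 < r /\
    forall n eps, 0 < eps -> sparkling_connection C lam B eps n -> lam ^+ n <= r ->
    `|ln (- ln eps) - (ln A - ln (lam ^+ n) - K / A * lam ^+ n)| <= c * (lam ^+ n) ^+ 2.
Proof.
move=> C_gt0 lam_gt0 lam_lt1 lnB_lt.
have A_gt0 : 0 < A by rewrite subr_gt0.
set c := 2 / ((1 - lam) * A) ^+ 2 / (1 - lam).
have c_gt0 : 0 < c by rewrite !divr_gt0 ?exprn_gt0 ?mulr_gt0 ?subr_gt0.
set M := c + `|K|; have M_gt0 : 0 < M by rewrite ltr_pwDl.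
exists (A / 2 / M), (2 * M ^+ 2 / A ^+ 2 + c / A); split; first by rewrite !divr_gt0.
move=> n eps eps_gt0 spark; set q := lam ^+ n => q_le.
have q_gt0 : 0 < q by rewrite exprn_gt0.
have E_bounds :=
  sparkling_connection_ln_eps_bounds n eps C_gt0 lam_gt0 lam_lt1 eps_gt0 lnB_lt spark.
rewrite -/q -/c in E_bounds; have /andP[E_ge0 E_le] := E_bounds.
have EK_le : `|- ln eps - (A / q - K) - K| <= M.
  apply: le_trans (ler_normB _ _) _; rewrite ger0_norm // lerD2r.
  exact: le_trans E_le (ler_piMr (ltW c_gt0) (exprn_ile1 n (ltW lam_gt0) (ltW lam_lt1))).
have qM_le : q * M <= A / 2 by rewrite -ler_pdivlMr.
have := ln_first_order_expansion A q K _ M c A_gt0 q_gt0 E_bounds EK_le qM_le.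
by rewrite (_ : A / q - K + _ = - ln eps) //; ring.
Qed.

End SparklingConnection.

Theorem lemma1 (R : realType) (lam C B : R) (eps : nat -> R) :
  0 < lam -> lam < 1 -> 0 < C -> 0 < B ->
  ln B < ln C / (1 - lam) ->
  (\forall n \near \oo, 0 < eps n) ->
  eps @ \oo --> (0 : R) ->
  (\forall n \near \oo, sparkling_connection C lam B (eps n) n) ->
  let beta := ln (ln C / (1 - lam) - ln B) in
  let theta := - expR (- beta) * (ln C / (1 - lam)) in
  (fun n : nat => ln (- ln (eps n)) - (- n%:R * ln lam + beta + theta * lam ^+ n))
    =o_\oo (fun n : nat => lam ^+ n).
Proof.
(* [0 < B] and [eps n --> 0] follow from the other hypotheses: B is an iterate
   of the monodromy, hence >= eps n > 0, and -ln (eps n) >= A / lam^n - K. *)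
move=> lam_gt0 lam_lt1 C_gt0 _ lnB_lt eps_gt0 _ spark beta theta.
have [r [c [r_gt0 expansion]]] :=
  sparkling_connection_ln_ln_eps_expansion C lam B C_gt0 lam_gt0 lam_lt1 lnB_lt.
have lamX_to0 : (GRing.exp lam : R ^nat) @ \oo --> 0 by apply: cvg_expr; rewrite gtr0_norm.
apply: (littleo_of_le_sqr _ _ _ c lamX_to0); near=> n.
have lamX_gt0 : 0 < lam ^+ n by rewrite exprn_gt0.
have -> : - n%:R * ln lam + beta + theta * lam ^+ n =
          ln (ln C / (1 - lam) - ln B) - ln (lam ^+ n) -
          ln C / (1 - lam) / (ln C / (1 - lam) - ln B) * lam ^+ n.
  by rewrite /theta /beta expRN lnK ?posrE ?subr_gt0 // lnXn // -mulr_natr; ring.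
rewrite (gtr0_norm lamX_gt0); apply: expansion; near: n.
- exact: eps_gt0.
- exact: spark.
- near=> m; rewrite -[lam ^+ m]ger0_norm ?exprn_ge0 ?(ltW lam_gt0) //.
  by near: m; apply: cvgr0_norm_le.
Unshelve. all: by end_near.
Qed.
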